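(* Let $R$ be a semiring and $f:M\to N$ a morphism of $R$-modules. (1) $f$ is a normal monomorphism if and only if $f$ is injective and $f(M)$ is a saturated submodule of $N$. (2) $f$ is a normal epimorphism if and only if there is a saturated submodule $K$ of $M$ and an isomorphism $\varphi:M/K\to N$ such that $f=\varphi\circ\pi$, where $\pi:M\to M/K$ is the natural projection.
   Context: Semirings are commutative with $0,1$; an $R$-module is a commutative monoid with $R$-action. A submodule $N$ of $M$ is saturated if $x+y\in N$ and $y\in N$ imply $x\in N$. For a submodule $K\subseteq M$, $M/K$ is the set of classes of the congruence $x\sim y\iff x+k=y+k'$ for some $k,k'\in K$, with induced operations. A morphism $f:M\to N$ is a normal monomorphism if it is the equalizer of some morphism $g:N\to L$ and the zero map; it is a normal epimorphism if it is the coequalizer of some morphism $g:L\to M$ and the zero map. *)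

From HB Require Import structures.
From mathcomp Require Import all_boot all_algebra.
From mathcomp Require Import boolp.
Set Implicit Arguments. Unset Strict Implicit. Unset Printing Implicit Defensive.
Import GRing.Theory.
Local Open Scope ring_scope.

Section Defs.
Variable R : comPzSemiRingType.

Record submodule (M : lSemiModType R) := Submodule {
  smem :> M -> Prop;
  smem0 : smem 0;
  smemD : forall x y, smem x -> smem y -> smem (x + y);
  smemZ : forall (r : R) x, smem x -> smem (r *: x) }.

Definition saturated (M : lSemiModType R) (N : M -> Prop) : Prop :=
  forall x y, N (x + y) -> N y -> N x.

Definition kcongr (M : lSemiModType R) (K : M -> Prop) (x y : M) : Prop :=
  exists k k', K k /\ K k' /\ x + k = y + k'.

Section Quotient.
Variables (M : lSemiModType R) (K : submodule M).

Definition quot : Type := {C : M -> Prop | exists x, C = kcongr K x}.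

Definition qproj (x : M) : quot := exist _ (kcongr K x) (ex_intro _ x erefl).

Definition qrep (C : quot) : M := projT1 (cid (proj2_sig C)).

Lemma kcongr_refl x : kcongr K x x.
Proof. by exists 0, 0; split; [exact: smem0|split; [exact: smem0|]]. Qed.

Lemma kcongr_sym x y : kcongr K x y -> kcongr K y x.
Proof. by case=> k [k' [Hk [Hk' e]]]; exists k', k. Qed.

Lemma kcongr_trans x y z : kcongr K x y -> kcongr K y z -> kcongr K x z.
Proof.
case=> k [k' [Hk [Hk' e1]]] [l [l' [Hl [Hl' e2]]]].
exists (k + l), (k' + l'); split; first exact: smemD.
split; first exact: smemD.
by rewrite addrA e1 -addrA (addrC k' l) addrA e2 -addrA (addrC l').
Qed.

Lemma kcongrD x y x' y' : kcongr K x x' -> kcongr K y y' ->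
  kcongr K (x + y) (x' + y').
Proof.
case=> k [k' [Hk [Hk' e1]]] [l [l' [Hl [Hl' e2]]]].
exists (k + l), (k' + l'); split; first exact: smemD.
split; first exact: smemD.
have -> : x + y + (k + l) = (x + k) + (y + l).
  by rewrite -!addrA; congr (_ + _); rewrite addrC -addrA; congr (_ + _); rewrite addrC.
have -> : x' + y' + (k' + l') = (x' + k') + (y' + l').
  by rewrite -!addrA; congr (_ + _); rewrite addrC -addrA; congr (_ + _); rewrite addrC.
by rewrite e1 e2.
Qed.

Lemma kcongrZ (r : R) x x' : kcongr K x x' -> kcongr K (r *: x) (r *: x').
Proof.
case=> k [k' [Hk [Hk' e1]]]; exists (r *: k), (r *: k'); split; first exact: smemZ.
by split; [exact: smemZ|rewrite -!scalerDr e1].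
Qed.

Lemma qprojP x y : qproj x = qproj y <-> kcongr K x y.
Proof.
split=> [e|h].
  have : kcongr K y y by exact: kcongr_refl.
  have -> : kcongr K y = kcongr K x by move: e => /(congr1 (@proj1_sig _ _)).
  by [].
apply: eq_exist; apply: funext => z; apply: propext; split.
  by apply: kcongr_trans; apply: kcongr_sym.
exact: kcongr_trans.
Qed.

Lemma qrepK C : qproj (qrep C) = C.
Proof.
rewrite /qrep; case: (cid (proj2_sig C)) => x e /=.
by case: C e => C pC /= e; apply: eq_exist.
Qed.

Lemma qrep_congr x : kcongr K (qrep (qproj x)) x.
Proof. by apply/qprojP; rewrite qrepK. Qed.

Definition qzero : quot := qproj 0.
Definition qadd (C D : quot) : quot := qproj (qrep C + qrep D).
Definition qscale (r : R) (C : quot) : quot := qproj (r *: qrep C).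

Lemma qprojD x y : qproj (x + y) = qadd (qproj x) (qproj y).
Proof. by apply/qprojP/kcongr_sym/kcongrD; apply: qrep_congr. Qed.

Lemma qprojZ r x : qproj (r *: x) = qscale r (qproj x).
Proof. by apply/qprojP/kcongr_sym/kcongrZ; apply: qrep_congr. Qed.

Lemma qaddA : associative qadd.
Proof.
by move=> C D E; rewrite -(qrepK C) -(qrepK D) -(qrepK E) -!qprojD addrA.
Qed.

Lemma qaddC : commutative qadd.
Proof. by move=> C D; rewrite -(qrepK C) -(qrepK D) -!qprojD addrC. Qed.

Lemma qadd0 : left_id qzero qadd.
Proof. by move=> C; rewrite -(qrepK C) /qzero -qprojD add0r. Qed.

HB.instance Definition _ := gen_eqMixin quot.
HB.instance Definition _ := gen_choiceMixin quot.
HB.instance Definition _ := GRing.isNmodule.Build quot qaddA qaddC qadd0.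

Lemma qscaleA a b (C : quot) : qscale a (qscale b C) = qscale (a * b) C.
Proof. by rewrite -(qrepK C) -!qprojZ scalerA. Qed.

Lemma qscale0 (C : quot) : qscale 0 C = 0.
Proof. by rewrite -(qrepK C) -qprojZ scale0r. Qed.

Lemma qscale1 : left_id 1 qscale.
Proof. by move=> C; rewrite -(qrepK C) -qprojZ scale1r. Qed.

Lemma qscaleDr : right_distributive qscale +%R.
Proof.
move=> r C D; rewrite -(qrepK C) -(qrepK D) /GRing.add /=.
by rewrite -qprojD -!qprojZ -qprojD scalerDr.
Qed.

Lemma qscaleDl (C : quot) : {morph qscale^~ C : a b / a + b}.
Proof.
by move=> a b; rewrite -(qrepK C) /GRing.add /= -!qprojZ -qprojD scalerDl.
Qed.

HB.instance Definition _ :=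
  GRing.Nmodule_isLSemiModule.Build R quot qscaleA qscale0 qscale1 qscaleDr qscaleDl.

End Quotient.

Definition is_equalizer_of_zero (K N L : lSemiModType R)
    (f : {linear K -> N}) (g : {linear N -> L}) : Prop :=
  (forall x, g (f x) = 0) /\
  forall (X : lSemiModType R) (h : {linear X -> N}),
    (forall x, g (h x) = 0) ->
    exists u : {linear X -> K},
      (forall x, f (u x) = h x) /\
      (forall v : {linear X -> K}, (forall x, f (v x) = h x) -> forall x, v x = u x).

Definition is_coequalizer_of_zero (L M N : lSemiModType R)
    (f : {linear M -> N}) (g : {linear L -> M}) : Prop :=
  (forall x, f (g x) = 0) /\
  forall (X : lSemiModType R) (h : {linear M -> X}),
    (forall x, h (g x) = 0) ->
    exists u : {linear N -> X},
      (forall x, u (f x) = h x) /\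
      (forall v : {linear N -> X}, (forall x, v (f x) = h x) -> forall y, v y = u y).

Definition normal_mono (M N : lSemiModType R) (f : {linear M -> N}) : Prop :=
  exists (L : lSemiModType R) (g : {linear N -> L}), is_equalizer_of_zero f g.

Definition normal_epi (M N : lSemiModType R) (f : {linear M -> N}) : Prop :=
  exists (L : lSemiModType R) (g : {linear L -> M}), is_coequalizer_of_zero f g.

Definition is_iso (A B : lSemiModType R) (phi : {linear A -> B}) : Prop :=
  exists psi : {linear B -> A},
    (forall x, psi (phi x) = x) /\ (forall y, phi (psi y) = y).

End Defs.

From HB Require Import structures.
From mathcomp Require Import all_boot all_algebra.
From mathcomp Require Import boolp.
Import GRing.Theory.
Local Open Scope ring_scope.
Set Implicit Arguments. Unset Strict Implicit. Unset Printing Implicit Defensive.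

(* Testing against the free module R (maps r |-> r *: x) shows that
   equalizers are injective and that the image of an equalizer of g and 0
   is exactly the kernel of g, which is always saturated; conversely an
   injective map with saturated image is the equalizer of the projection onto
   the quotient by its image, since for a saturated K the class of y is zero
   exactly when y lies in K.  Dually, a coequalizer f of g and 0 is an
   epimorphism, and the universal property applied to the projection onto
   M / ker f inverts the map M / ker f -> N induced by f; conversely every
   projection M -> M / K is the coequalizer of the inclusion K -> M and 0,
   and coequalizers are stable under composition with isomorphisms. *)

Section LinearOf.
Variables (R : comPzSemiRingType) (U V : lSemiModType R).

Definition linear_of (f : U -> V) (fL : semilinear_for *:%R f) : {linear U -> V} :=
  HB.pack f (GRing.isSemilinear.Build R U V *:%R f fL).

End LinearOf.

Section Submodules.
Variables (R : comPzSemiRingType) (M : lSemiModType R).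

Lemma ray_is_semilinear (x : M) : semilinear_for *:%R (fun r : R^o => r *: x).
Proof. by split=> [a b | a b]; rewrite /= ?scalerA ?scalerDl. Qed.

Definition ray (x : M) : {linear R^o -> M} := linear_of (ray_is_semilinear x).

Lemma rayE x r : ray x r = r *: x. Proof. by []. Qed.

Section SubmodOf.
Variable K : submodule M.

Definition submod_of : Type := {x : M | K x}.

HB.instance Definition _ := gen_eqMixin submod_of.
HB.instance Definition _ := gen_choiceMixin submod_of.

Definition submod0 : submod_of := exist _ 0 (smem0 K).
Definition submod_add (a b : submod_of) : submod_of :=
  exist _ (sval a + sval b) (smemD (svalP a) (svalP b)).
Definition submod_scale (r : R) (a : submod_of) : submod_of :=
  exist _ (r *: sval a) (smemZ r (svalP a)).

Lemma submod_addA : associative submod_add.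
Proof. by move=> a b c; apply: eq_exist; rewrite /= addrA. Qed.

Lemma submod_addC : commutative submod_add.
Proof. by move=> a b; apply: eq_exist; rewrite /= addrC. Qed.

Lemma submod_add0 : left_id submod0 submod_add.
Proof. by move=> [a Ka]; apply: eq_exist; rewrite /= add0r. Qed.

HB.instance Definition _ :=
  GRing.isNmodule.Build submod_of submod_addA submod_addC submod_add0.

Lemma submod_scaleA a b (c : submod_of) :
  submod_scale a (submod_scale b c) = submod_scale (a * b) c.
Proof. by apply: eq_exist; rewrite /= scalerA. Qed.

Lemma submod_scale0 (c : submod_of) : submod_scale 0 c = 0.
Proof. by apply: eq_exist; rewrite /= scale0r. Qed.

Lemma submod_scale1 : left_id 1 submod_scale.
Proof. by move=> [c Kc]; apply: eq_exist; rewrite /= scale1r. Qed.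

Lemma submod_scaleDr : right_distributive submod_scale +%R.
Proof. by move=> r a b; apply: eq_exist; rewrite /= scalerDr. Qed.

Lemma submod_scaleDl (c : submod_of) : {morph submod_scale^~ c : a b / a + b}.
Proof. by move=> a b; apply: eq_exist; rewrite /= scalerDl. Qed.

HB.instance Definition _ := GRing.Nmodule_isLSemiModule.Build R submod_of
  submod_scaleA submod_scale0 submod_scale1 submod_scaleDr submod_scaleDl.

Definition submod_val : {linear submod_of -> M} :=
  @linear_of R submod_of M sval (fun _ _ => erefl, fun _ _ => erefl).

End SubmodOf.

Variables (N : lSemiModType R) (f : {linear M -> N}).

Definition image_submod : submodule N.
Proof.
refine (@Submodule R N (fun y => exists x, f x = y) _ _ _).
- by exists 0; rewrite linear0.
- by move=> _ _ [a <-] [b <-]; exists (a + b); rewrite linearD.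
- by move=> r _ [a <-]; exists (r *: a); rewrite linearZ_LR.
Defined.

Definition ker_submod : submodule M.
Proof.
refine (@Submodule R M (fun x => f x = 0) _ _ _).
- by rewrite linear0.
- by move=> x y /= fx0 fy0; rewrite linearD fx0 fy0 addr0.
- by move=> r x /= fx0; rewrite linearZ_LR fx0 scaler0.
Defined.

Lemma ker_saturated : saturated ker_submod.
Proof. by move=> x y /=; rewrite linearD => fxy fy; rewrite -fxy fy addr0. Qed.

End Submodules.

Section Quotient.
Variables (R : comPzSemiRingType) (M : lSemiModType R) (K : submodule M).

Definition qproj_lin : {linear M -> quot K} :=
  linear_of (f := qproj K) (fun r x => qprojZ K r x, qprojD K).

Lemma qproj_eq0 x : K x -> qproj K x = 0.
Proof.
move=> Kx; apply/qprojP; exists 0, x.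
by split; [exact: smem0 | split; rewrite // addr0 add0r].
Qed.

Lemma qproj_eq0_saturated y : saturated K -> qproj K y = 0 -> K y.
Proof.
move=> satK /qprojP [k [k' [Kk [Kk' yk]]]].
by apply: (satK y k) => //; rewrite yk add0r.
Qed.

Variables (N : lSemiModType R) (h : {linear M -> N}).
Hypothesis hK : forall k, K k -> h k = 0.

Lemma kcongr_lin x y : kcongr K x y -> h x = h y.
Proof.
case=> k [k' [Kk [Kk' xy]]].
by have := congr1 h xy; rewrite !linearD (hK Kk) (hK Kk') !addr0.
Qed.

Definition qlift_fun (C : quot K) : N := h (qrep C).

Lemma qlift_funE x : qlift_fun (qproj K x) = h x.
Proof. exact/kcongr_lin/qrep_congr. Qed.

Lemma qlift_fun_is_semilinear : semilinear_for *:%R qlift_fun.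
Proof.
split=> [a C | C D]; rewrite -(qrepK C).
  by rewrite -[_ *: _](qprojZ K) !qlift_funE linearZ.
by rewrite -(qrepK D) -[_ + _](qprojD K) !qlift_funE linearD.
Qed.

Definition qlift : {linear quot K -> N} := linear_of qlift_fun_is_semilinear.

Lemma qliftE x : qlift (qproj K x) = h x.
Proof. exact: qlift_funE. Qed.

End Quotient.

Lemma qproj_coequalizer (R : comPzSemiRingType) (M : lSemiModType R)
    (K : submodule M) :
  is_coequalizer_of_zero (qproj_lin K) (submod_val K).
Proof.
split=> [[k Kk] | X h hg]; first exact: qproj_eq0.
have hK k : K k -> h k = 0 by move=> Kk; exact: (hg (exist _ k Kk)).
exists (qlift hK); split=> [x | v vE C]; first exact: qliftE.
by rewrite -(qrepK C) qliftE; exact: vE.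
Qed.

Section Equalizers.
Variables (R : comPzSemiRingType) (M N L : lSemiModType R).
Variables (f : {linear M -> N}) (g : {linear N -> L}).

Lemma equalizer_of_zero_mono (X : lSemiModType R) (u v : {linear X -> M}) :
  is_equalizer_of_zero f g ->
  (forall x, f (u x) = f (v x)) -> forall x, u x = v x.
Proof.
move=> [gf0 univ] fuv x.
have [w [_ wU]] := univ _ (f \o v) (fun y => gf0 (v y)).
by rewrite (wU u fuv) (wU v (fun=> erefl)).
Qed.

Lemma linear_mono_injective :
  (forall u v : {linear R^o -> M}, (forall r, f (u r) = f (v r)) ->
     forall r, u r = v r) ->
  injective f.
Proof.
move=> mono x y fxy.
have := mono (ray x) (ray y) (fun r => ltac:(by rewrite !rayE !linearZ_LR fxy)) 1.
by rewrite !rayE !scale1r.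
Qed.

Lemma equalizer_of_zero_image y :
  is_equalizer_of_zero f g -> (exists x, f x = y) <-> g y = 0.
Proof.
move=> [gf0 univ]; split=> [[x <-] // | gy0].
have gray r : g (ray y r) = 0 by rewrite rayE linearZ_LR gy0 scaler0.
have [u [fu _]] := univ _ _ gray.
by exists (u 1); rewrite fu rayE scale1r.
Qed.

End Equalizers.

Lemma injective_factor (R : comPzSemiRingType) (X M N : lSemiModType R)
    (f : {linear M -> N}) (h : {linear X -> N}) :
  injective f -> (forall x, exists m, f m = h x) ->
  exists u : {linear X -> M}, forall x, f (u x) = h x.
Proof.
move=> finj hf; pose u x := projT1 (cid (hf x)).
have uE x : f (u x) = h x := projT2 (cid (hf x)).
have uL : semilinear_for *:%R u.
  by split=> [a x | x y]; apply: finj; rewrite ?linearZ_LR ?linearD !uE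
     ?linearZ_LR ?linearD.
by exists (linear_of uL).
Qed.

Lemma saturated_image_equalizer (R : comPzSemiRingType) (M N : lSemiModType R)
    (f : {linear M -> N}) :
  injective f -> saturated (image_submod f) ->
  is_equalizer_of_zero f (qproj_lin (image_submod f)).
Proof.
move=> finj sat; split=> [x | X h hg]; first by apply: qproj_eq0; exists x.
have [u fu] : exists u : {linear X -> M}, forall x, f (u x) = h x.
  by apply: injective_factor => // x; exact: qproj_eq0_saturated (hg x).
by exists u; split=> // v fv x; apply: finj; rewrite fv fu.
Qed.

Section Coequalizers.
Variables (R : comPzSemiRingType) (L M N : lSemiModType R).
Variables (f : {linear M -> N}) (g : {linear L -> M}).

Lemma coequalizer_of_zero_epi (X : lSemiModType R) (v w : {linear N -> X}) :
  is_coequalizer_of_zero f g ->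
  (forall x, v (f x) = w (f x)) -> forall y, v y = w y.
Proof.
move=> [fg0 univ] vwf y.
have hg x : (w \o f) (g x) = 0 by rewrite /= fg0 linear0.
have [u [_ uU]] := univ _ _ hg.
by rewrite (uU v vwf) (uU w (fun=> erefl)).
Qed.

Definition ker_lift : {linear quot (ker_submod f) -> N} :=
  qlift (K := ker_submod f) (h := f) (fun _ fk0 => fk0).

Lemma ker_liftE x : ker_lift (qproj _ x) = f x.
Proof. exact: qliftE. Qed.

Lemma coequalizer_of_zero_iso :
  is_coequalizer_of_zero f g -> is_iso ker_lift.
Proof.
move=> co; have [fg0 univ] := co.
have [psi [psiE _]] := univ _ (qproj_lin (ker_submod f))
  (fun x => @qproj_eq0 _ _ (ker_submod f) _ (fg0 x)).
have psi_lift x : psi (f x) = qproj _ x := psiE x.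
exists psi; split=> [C | y].
  by rewrite -(qrepK C) ker_liftE psi_lift.
have := coequalizer_of_zero_epi (v := ker_lift \o psi) (w := idfun) co.
by apply=> x; rewrite /= psi_lift qlift_funE.
Qed.

Lemma coequalizer_of_zero_iso_comp (Q : lSemiModType R)
    (q : {linear M -> Q}) (phi : {linear Q -> N}) :
  is_coequalizer_of_zero q g -> is_iso phi -> (forall x, f x = phi (q x)) ->
  is_coequalizer_of_zero f g.
Proof.
move=> [qg0 univ] [psi [psiK phiK]] fE.
split=> [x | X h hg]; first by rewrite fE qg0 linear0.
have [u [uq uU]] := univ _ _ hg.
exists (u \o psi); split=> [x | v vf y]; first by rewrite /= fE psiK uq.
have vphi z : (v \o phi) z = u z by apply: uU => x; rewrite /= -fE.
by rewrite /= -vphi /= phiK.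
Qed.

End Coequalizers.

Theorem mainTheorem9 (R : comPzSemiRingType) (M N : lSemiModType R)
    (f : {linear M -> N}) :
  (normal_mono f <->
     injective f /\ saturated (fun y : N => exists x : M, f x = y)) /\
  (normal_epi f <->
     exists K : submodule M,
       saturated K /\
       exists phi : {linear quot K -> N},
         is_iso phi /\ forall x : M, f x = phi (qproj K x)).
Proof.
split; split.
- move=> [L [g feq]]; split.
    by apply: linear_mono_injective => u v; exact: equalizer_of_zero_mono feq.
  move=> x y; rewrite !(equalizer_of_zero_image _ feq); exact: ker_saturated.
- move=> [finj sat]; exists _, (qproj_lin (image_submod f)).
  exact: saturated_image_equalizer.
- move=> [L [g co]]; exists (ker_submod f); split; first exact: ker_saturated.
  exists (ker_lift f); split; first exact: coequalizer_of_zero_iso co.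
  by move=> x; rewrite ker_liftE.
- move=> [K [_ [phi [iso fE]]]]; exists _, (submod_val K).
  exact: coequalizer_of_zero_iso_comp (qproj_coequalizer K) iso fE.
Qed.
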